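(* Let $F$ be a field of characteristic zero and let $Q$ be a finite quiver with vertex set $Q_0=\{1,\dots,n\}$ such that the path algebra $FQ$ is a PI algebra. Let $\pi$ be an arbitrary set of paths in $Q$, let $FQ_\pi$ be the subalgebra of $FQ$ generated by $\pi$, and let \[A_\pi=\{A\in M_n(F)\mid A_{i,j}=0 \text{ whenever there is no path in } \tilde{\pi} \text{ from } i \text{ to } j\},\] where $\tilde\pi$ is the set of all paths of $Q$ that are (nonzero) products of elements of $\pi$. Then $\mathrm{Id}(FQ_\pi)=\mathrm{Id}(A_\pi)$.
   Context: A path of length $\ell$ in $Q$ is a concatenation of $\ell$ composable arrows; $s(p)$ and $t(p)$ denote the starting and terminal vertices of a path $p$; for each vertex $i$ there is a length-zero path $e_i$ with $s(e_i)=t(e_i)=i$. The path algebra $FQ$ is the $F$-vector space with basis all paths of $Q$, with product of paths $p,q$ equal to the concatenation $pq$ if $t(p)=s(q)$ and $0$ otherwise. For a set $\pi$ of paths, $FQ_\pi$ is the (not necessarily unital) subalgebra of $FQ$ generated by $\pi$, i.e. the linear span of $\tilde\pi$. $M_n(F)$ is the algebra of $n\times n$ matrices over $F$; equivalently $A_\pi$ is the linear span of the elementary matrices $e_{s(p)t(p)}$, $p\in\tilde\pi$. For an $F$-algebra $A$, $\mathrm{Id}(A)$ denotes the T-ideal of the free associative algebra $F\langle X\rangle$ on countably many variables consisting of all polynomial identities satisfied by $A$; $A$ is PI if $\mathrm{Id}(A)\neq\{0\}$. *)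

From HB Require Import structures.
From mathcomp Require Import all_boot all_order all_algebra.
Set Implicit Arguments. Unset Strict Implicit. Unset Printing Implicit Defensive.
Import GRing.Theory.
Local Open Scope ring_scope.

(* A polynomial is represented by a finite formal sum of monomials c * x_{i1} ... x_{ik};
   a word [:: i1; ...; ik] encodes the monomial x_{i1} ... x_{ik}. *)
Definition ncpoly (F : Type) := seq (F * seq nat).

Definition nccoef (F : nmodType) (f : ncpoly F) (w : seq nat) : F :=
  \sum_(cw <- f | cw.2 == w) cw.1.

Definition ncpoly_nonzero (F : nmodType) (f : ncpoly F) : Prop :=
  exists w, nccoef f w != 0.

Definition eval_word (T : Type) (one : T) (mul : T -> T -> T)
  (phi : nat -> T) (w : seq nat) : T :=
  foldr (fun i acc => mul (phi i) acc) one w.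

Definition eval_ncpoly (F T : Type) (zero one : T) (add mul : T -> T -> T)
  (scale : F -> T -> T) (phi : nat -> T) (f : ncpoly F) : T :=
  foldr (fun cw acc => add (scale cw.1 (eval_word one mul phi cw.2)) acc) zero f.

Section Quiver.
Variables (F : fieldType) (n : nat) (E : finType) (src tgt : E -> 'I_n).

(* A (candidate) path: a starting vertex and a sequence of arrows. *)
Definition qpath := ('I_n * seq E)%type.

Fixpoint valid_from (v : 'I_n) (s : seq E) : bool :=
  match s with
  | [::] => true
  | a :: s' => (src a == v) && valid_from (tgt a) s'
  end.

(* p is a path of Q (the length-0 path e_i is (i, [::])) *)
Definition is_qpath (p : qpath) : bool := valid_from p.1 p.2.

Definition endv (v : 'I_n) (s : seq E) : 'I_n := last v (map tgt s).
Definition qs (p : qpath) : 'I_n := p.1.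
Definition qt (p : qpath) : 'I_n := endv p.1 p.2.

(* concatenation of paths (meaningful when qt p = qs q) *)
Definition qcat (p q : qpath) : qpath := (p.1, p.2 ++ q.2).

(* Elements of the path algebra FQ: finitely supported F-valued functions on
   paths (coefficient of each basis path); the support consists of paths. *)
Definition pa := qpath -> F.

Definition in_FQ (x : pa) : Prop :=
  exists L : seq qpath, forall p, x p != 0 -> (p \in L) && is_qpath p.

Definition pa_zero : pa := fun _ => 0.
Definition pa_one : pa := fun r => if r.2 is [::] then 1 else 0. (* sum of all e_i *)
Definition pa_add (x y : pa) : pa := fun r => x r + y r.
Definition pa_scale (c : F) (x : pa) : pa := fun r => c * x r.
(* product: coefficient of r in x*y is the sum over all factorizations r = p q
   (p = first k arrows of r, q = the remaining arrows) of x p * y q. *)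
Definition pa_mul (x y : pa) : pa := fun r =>
  \sum_(k < (size r.2).+1)
     x (r.1, take k r.2) * y (endv r.1 (take k r.2), drop k r.2).

Definition pa_eval (phi : nat -> pa) (f : ncpoly F) : pa :=
  eval_ncpoly pa_zero pa_one pa_add pa_mul pa_scale phi f.

Definition pa_identity (S : pa -> Prop) (f : ncpoly F) : Prop :=
  forall phi : nat -> pa, (forall i, S (phi i)) -> pa_eval phi f = pa_zero.

Definition FQ_is_PI : Prop :=
  exists f : ncpoly F, ncpoly_nonzero f /\ pa_identity in_FQ f.

Inductive in_tilde (pi : qpath -> Prop) : qpath -> Prop :=
| tilde_base p : pi p -> in_tilde pi p
| tilde_step p q : in_tilde pi p -> pi q -> qt p = qs q -> in_tilde pi (qcat p q).

(* FQ_pi : the linear span of pi~ *)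
Definition in_FQpi (pi : qpath -> Prop) (x : pa) : Prop :=
  exists L : seq qpath, forall p, x p != 0 -> p \in L /\ in_tilde pi p.

Definition in_Api (pi : qpath -> Prop) (A : 'M[F]_n) : Prop :=
  forall i j, A i j != 0 -> exists p, in_tilde pi p /\ qs p = i /\ qt p = j.

Definition mx_eval (phi : nat -> 'M[F]_n) (f : ncpoly F) : 'M[F]_n :=
  eval_ncpoly (0 : 'M[F]_n) (1%:M) (fun A B => A + B) (fun A B => A *m B)
    (fun c A => c *: A) phi f.

Definition mx_identity (S : 'M[F]_n -> Prop) (f : ncpoly F) : Prop :=
  forall phi : nat -> 'M[F]_n, (forall i, S (phi i)) -> mx_eval phi f = 0.

End Quiver.

From Pilot Require Import Defs.
From HB Require Import structures.
From mathcomp Require Import all_boot all_order all_algebra zify.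
From Stdlib Require Import FunctionalExtensionality ClassicalEpsilon.
Set Implicit Arguments. Unset Strict Implicit. Unset Printing Implicit Defensive.
Import GRing.Theory.
Local Open Scope ring_scope.

(* Both identities are transferred through the maps sending a path [p] to
   [x ^ w(p) e_(s(p), t(p))] in [M_n(F)], for a weight [w] on arrows and a scalar [x]:
   they are multiplicative and send [FQ_pi] into [A_pi]. With [x = 1] this gives
   [Id(FQ_pi) <= Id(A_pi)]. Conversely, if [FQ] is PI then any two cycles at a vertex
   commute (otherwise they would generate a free subalgebra), so a path is determined by
   its source and its multiset of arrows, hence by its endpoints and its weight when
   [w(a) = N ^ rank(a)] with [N] large. The [(s(r), t(r))] entry of an identity of [A_pi]
   evaluated at the weighted images is then a polynomial in [x] vanishing on the infinite
   field [F], and its coefficient of [x ^ w(r)] is the coefficient of [r] in the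
   evaluation in [FQ_pi]. *)

Lemma eval_word_morph (T U : Type) (oneT : T) (mulT : T -> T -> T)
    (oneU : U) (mulU : U -> U -> U) (h : T -> U) :
  h oneT = oneU -> {morph h : a b / mulT a b >-> mulU a b} ->
  forall phi w, h (eval_word oneT mulT phi w) = eval_word oneU mulU (h \o phi) w.
Proof. by move=> h1 hM phi; elim=> [|i w IH] //=; rewrite hM IH. Qed.

Lemma eval_ncpoly_morph (F T U : Type) zT oT (addT mulT : T -> T -> T)
    (scaleT : F -> T -> T) zU oU (addU mulU : U -> U -> U) (scaleU : F -> U -> U)
    (h : T -> U) :
  h zT = zU -> h oT = oU -> {morph h : a b / addT a b >-> addU a b} ->
  {morph h : a b / mulT a b >-> mulU a b} ->
  (forall c, {morph h : a / scaleT c a >-> scaleU c a}) ->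
  forall phi f, h (eval_ncpoly zT oT addT mulT scaleT phi f)
                = eval_ncpoly zU oU addU mulU scaleU (h \o phi) f.
Proof.
move=> h0 h1 hA hM hS phi; elim=> [|[c w] f IH] //=.
by rewrite hA hS IH (eval_word_morph h1 hM).
Qed.

Lemma eval_ncpoly_ind (F T : Type) z o (add mul : T -> T -> T) (scale : F -> T -> T)
    (P : T -> Prop) phi :
  P z -> P o -> (forall x y, P x -> P y -> P (add x y)) ->
  (forall x y, P x -> P y -> P (mul x y)) -> (forall c x, P x -> P (scale c x)) ->
  (forall i, P (phi i)) -> forall f, P (eval_ncpoly z o add mul scale phi f).
Proof.
move=> Pz Po Padd Pmul Pscale Pphi.
have Pword w : P (eval_word o mul phi w) by elim: w => //= i w; apply: Pmul.
by elim=> //= [[c w]] f IH; apply: Padd => //; apply: Pscale.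
Qed.

Lemma sumr_pred1_uniq (V : nmodType) (T : eqType) (r : seq T) (G : T -> V) x :
  uniq r -> \sum_(y <- r) (if y == x then G y else 0) = if x \in r then G x else 0.
Proof.
elim: r => [|y r IH] /=; first by rewrite big_nil.
case/andP=> yNr r_uniq; rewrite big_cons IH // in_cons.
by case: (eqVneq y x) => [<-|_]; rewrite ?(negbTE yNr) ?addr0 ?add0r.
Qed.

Lemma flatten_map_inj (A T : eqType) (g : A -> seq T) L :
  (0 < L)%N -> (forall a, size (g a) = L) -> injective g ->
  injective (fun s => flatten (map g s)).
Proof.
move=> L_gt0 size_g g_inj; elim=> [|a s IH] [|b s'] //=.
- by move/(congr1 size); rewrite /= size_cat size_g; lia.
- by move/(congr1 size); rewrite /= size_cat size_g; lia.
move/eqP; rewrite eqseq_cat ?size_g // => /andP[/eqP gab /eqP ss'].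
by rewrite (g_inj _ _ gab) (IH _ ss').
Qed.

Definition unary (k : nat) : seq bool := rcons (nseq k false) true.

Lemma unary_flatten_inj : injective (fun w => flatten (map unary w)).
Proof.
elim=> [|a w IH] [|b w'] //=.
- by move/(congr1 size); rewrite size_cat size_rcons.
- by move/(congr1 size); rewrite size_cat size_rcons.
move=> eq_ab; have ab : a = b.
  move/(congr1 (index true)): eq_ab.
  by rewrite /unary !cat_rcons !index_cat !mem_nseq !andbF /= !size_nseq !addn0.
move: eq_ab; rewrite ab => /eqP; rewrite eqseq_cat // => /andP[_ /eqP ww'].
by rewrite (IH _ ww').
Qed.

(* The letter [k] is coded by [d ^ k c]. *)
Definition block_code (T : Type) (c d : seq T) (w : seq nat) : seq T :=
  flatten [seq flatten [seq if b then c else d | b <- unary k] | k <- w].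

Lemma block_code_inj (T : eqType) (c d : seq T) :
  size c = size d -> c != d -> injective (block_code c d).
Proof.
move=> size_cd cd.
have c_gt0 : (0 < size c)%N by case: c d cd size_cd => [|x c] [|y d].
pose blk (b : bool) := if b then c else d.
have blk_size b : size (blk b) = size c by case: b.
have blk_inj : injective blk.
  by move=> [] [] // /eqP; rewrite ?(negbTE cd) // eq_sym (negbTE cd).
have -> : block_code c d
          = (fun s => flatten (map blk s)) \o (fun w => flatten (map unary w)).
  rewrite /block_code; apply: functional_extensionality => /=.
  by elim=> //= k w ->; rewrite map_cat flatten_cat.
exact: inj_comp (flatten_map_inj c_gt0 blk_size blk_inj) unary_flatten_inj.
Qed.

Lemma digits_inj N m (c d : 'I_m -> nat) :
  (forall i, c i < N)%N -> (forall i, d i < N)%N ->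
  (\sum_(i < m) c i * N ^ i = \sum_(i < m) d i * N ^ i)%N -> c =1 d.
Proof.
elim: m c d => [|m IH] c d c_lt d_lt; first by move=> _ [].
have N_gt0 : (0 < N)%N by apply: leq_ltn_trans (c_lt ord0).
have shift (e : 'I_m.+1 -> nat) : (\sum_(i < m.+1) e i * N ^ i
    = e ord0 + (\sum_(i < m) e (lift ord0 i) * N ^ i) * N)%N.
  rewrite big_ord_recl expn0 muln1 big_distrl /=; congr (_ + _)%N.
  by apply: eq_bigr => i _; rewrite expnSr mulnA.
rewrite !shift => eq_cd.
have cd0 : c ord0 = d ord0.
  by move/(congr1 (modn^~ N)): eq_cd; rewrite ![(_ + _ * N)%N]addnC !modnMDl !modn_small.
move: eq_cd; rewrite cd0 => /addnI/eqP; rewrite eqn_pmul2r // => /eqP eq_cd i.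
case: (unliftP ord0 i) => [j ->|->] //.
by apply: (IH (c \o lift ord0) (d \o lift ord0)) => // k /=.
Qed.

Definition seq_weight (T : Type) (wt : T -> nat) (s : seq T) : nat :=
  (\sum_(a <- s) wt a)%N.

Lemma seq_weight_count (T : finType) (wt : T -> nat) (s : seq T) :
  seq_weight wt s = (\sum_(a : T) count_mem a s * wt a)%N.
Proof.
elim: s => [|b s IH]; first by rewrite /seq_weight big_nil big1.
rewrite /seq_weight big_cons -/(seq_weight _ _) IH /=.
under [RHS]eq_bigr do rewrite mulnDl.
rewrite big_split /=; congr (_ + _)%N.
by rewrite (bigD1 b) //= eqxx mul1n big1 ?addn0 // => a /negbTE; rewrite eq_sym => ->.
Qed.

(* The weight is the base-[N] number whose digits are the multiplicities of the letters. *)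
Lemma perm_eq_seq_weight (T : finType) N (s1 s2 : seq T) :
  (size s1 < N)%N -> (size s2 < N)%N ->
  seq_weight (fun a => N ^ enum_rank a)%N s1
    = seq_weight (fun a => N ^ enum_rank a)%N s2 -> perm_eq s1 s2.
Proof.
move=> s1_lt s2_lt; rewrite !seq_weight_count !(big_enum_val (A := T)) /=.
under eq_bigr do rewrite enum_valK.
under [in X in _ = X -> _]eq_bigr do rewrite enum_valK.
move=> eq_wt; apply/allP => x _ /=; rewrite -(enum_rankK x); apply/eqP.
by apply: (digits_inj _ _ eq_wt) => i; apply: leq_ltn_trans (count_size _ _) _.
Qed.

Lemma pchar0_natr_inj (F : fieldType) :
  [pchar F] =i pred0 -> injective (fun k : nat => k%:R : F).
Proof.
move=> F0 a b /=; wlog le_ab : a b / (a <= b)%N.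
  move=> wlog_ab ab; case/orP: (leq_total a b) => [le_ab|le_ba].
    exact: wlog_ab.
  exact/esym/wlog_ab.
move/esym/eqP; rewrite -subr_eq0 -natrB // ((pcharf0P F).1 F0) subn_eq0 => le_ba.
by apply/eqP; rewrite eqn_leq le_ab.
Qed.

Lemma pchar0_poly_eq0 (F : fieldType) (p : {poly F}) :
  [pchar F] =i pred0 -> (forall x, p.[x] = 0) -> p = 0.
Proof.
move=> F0 p0; apply: (@roots_geq_poly_eq0 _ p [seq k%:R | k <- iota 0 (size p)]).
- by apply/allP => _ /mapP[k _ ->]; apply/eqP/p0.
- by rewrite map_inj_uniq ?iota_uniq //; apply: pchar0_natr_inj.
- by rewrite size_map size_iota.
Qed.

Lemma sum_monomials_eq0 (F : fieldType) (I : Type) (r : seq I) (a : I -> F) (e : I -> nat) :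
  [pchar F] =i pred0 -> (forall x, \sum_(i <- r) a i * x ^+ e i = 0) ->
  forall k, \sum_(i <- r | e i == k) a i = 0.
Proof.
move=> F0 vanish k; pose p : {poly F} := \sum_(i <- r) a i *: 'X^(e i).
have p0 : p = 0.
  apply: pchar0_poly_eq0 => // x; rewrite horner_sum -[RHS](vanish x).
  by apply: eq_bigr => i _; rewrite hornerZ hornerXn.
rewrite big_mkcond -[RHS](coef0 _ k) -p0 coef_sum; apply: eq_bigr => i _.
by rewrite coefZ coefXn eq_sym; case: eqP; rewrite ?mulr1 ?mulr0.
Qed.

Section Paths.
Variables (n : nat) (E : finType) (src tgt : E -> 'I_n).
Local Notation qpath := (qpath n E).
Local Notation endv := (endv tgt).
Local Notation valid_from := (valid_from src tgt).
Local Notation qt := (qt tgt).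
Local Notation is_qpath := (is_qpath src tgt).

Lemma endv_cat v s t : endv v (s ++ t) = endv (endv v s) t.
Proof. by rewrite /Defs.endv map_cat last_cat. Qed.

Lemma valid_from_cat v s t :
  valid_from v (s ++ t) = valid_from v s && valid_from (endv v s) t.
Proof. by elim: s v => [|a s IH] v //=; rewrite IH andbA. Qed.

Lemma qt_qcat (p q : qpath) : qt p = qs q -> qt (qcat p q) = qt q.
Proof. by rewrite /qt /qcat /= endv_cat => ->. Qed.

Lemma is_qpath_qcat (p q : qpath) :
  is_qpath p -> is_qpath q -> qt p = qs q -> is_qpath (qcat p q).
Proof.
rewrite /is_qpath /= valid_from_cat => -> q_valid pq /=.
by have -> : endv p.1 p.2 = q.1 := pq.
Qed.

Lemma in_tilde_is_qpath (pi : qpath -> Prop) :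
  (forall p, pi p -> is_qpath p) -> forall p, in_tilde tgt pi p -> is_qpath p.
Proof.
move=> pi_paths p; elim=> [q /pi_paths //|p' q _ p'_path /pi_paths q_path].
exact: is_qpath_qcat.
Qed.

Definition is_cycle v (s : seq E) : bool := valid_from v s && (endv v s == v).

Definition cycles_commute : Prop :=
  forall v c1 c2, is_cycle v c1 -> is_cycle v c2 -> c1 ++ c2 = c2 ++ c1.

Lemma is_cycle_cat v s t : is_cycle v s -> is_cycle v t -> is_cycle v (s ++ t).
Proof.
case/andP=> s_valid /eqP s_end /andP[t_valid t_end].
by rewrite /is_cycle valid_from_cat endv_cat s_end s_valid t_valid.
Qed.

Lemma is_cycle_flatten v (ss : seq (seq E)) :
  all (is_cycle v) ss -> is_cycle v (flatten ss).
Proof.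
elim: ss => [|s ss IH] /=; first by rewrite /is_cycle /Defs.endv eqxx.
by case/andP=> s_cycle /IH; apply: is_cycle_cat.
Qed.

(* If the first arrows [a != b] differ, the prefixes of [s1] and [s2] ending just
   before the first occurrence of [b], resp. [a], are cycles at [v] that do not commute. *)
Lemma cycles_commute_perm_eq : cycles_commute ->
  forall v s1 s2, valid_from v s1 -> valid_from v s2 -> perm_eq s1 s2 -> s1 = s2.
Proof.
move=> comm v s1 s2; elim: s1 s2 v => [|a s1 IH] [|b s2] v //=;
  try by move=> _ _ /perm_size.
case/andP=> /eqP a_src s1_valid /andP[/eqP b_src s2_valid] s12.
have [eq_ab|ab] := eqVneq a b.
  by subst b; rewrite perm_cons in s12; rewrite (IH s2 (tgt a)).
have a_s2 : a \in s2.
  by have := perm_mem s12 a; rewrite !in_cons eqxx (negbTE ab) /= => <-.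
have b_s1 : b \in s1.
  by have := perm_mem s12 b; rewrite !in_cons eqxx [b == a]eq_sym (negbTE ab) /= => ->.
case/splitPr: b_s1 s1_valid => p1 p2.
rewrite valid_from_cat /= => /and3P[p1_valid /eqP p1_end _].
case/splitPr: a_s2 s2_valid => q1 q2.
rewrite valid_from_cat /= => /and3P[q1_valid /eqP q1_end _].
have cyc_a : is_cycle v (a :: p1).
  apply/andP; split; first by rewrite /= a_src eqxx.
  by apply/eqP; rewrite -[RHS]b_src p1_end.
have cyc_b : is_cycle v (b :: q1).
  apply/andP; split; first by rewrite /= b_src eqxx.
  by apply/eqP; rewrite -[RHS]a_src q1_end.
by case: (comm v _ _ cyc_a cyc_b) => eq_ab; rewrite eq_ab eqxx in ab.
Qed.

Lemma qpath_eq_of_seq_weight N (p q : qpath) : cycles_commute ->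
  is_qpath p -> is_qpath q -> qs p = qs q ->
  (size p.2 < N)%N -> (size q.2 < N)%N ->
  seq_weight (fun a => N ^ enum_rank a)%N p.2
    = seq_weight (fun a => N ^ enum_rank a)%N q.2 -> p = q.
Proof.
case: p q => [v s] [w t] comm /= s_valid t_valid /= vw s_lt t_lt eq_wt.
move: t_valid; rewrite -vw => t_valid; congr (_, _).
exact: cycles_commute_perm_eq comm v s t s_valid t_valid
         (perm_eq_seq_weight s_lt t_lt eq_wt).
Qed.

End Paths.

Section FormalSums.
Variables (F : fieldType) (n : nat) (E : finType) (src tgt : E -> 'I_n).
Local Notation qpath := (qpath n E).
Local Notation endv := (endv tgt).
Local Notation qt := (qt tgt).
Local Notation pa := (pa F n E).

(* The type [pa] of elements of [FQ] has no finite support built in, so we compute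
   with finite formal combinations of paths and read them in [FQ] or in [M_n(F)]
   through [pa_of_fsum] and [mx_of_fsum]. *)
Definition fsum := seq (F * qpath).
Definition fsum_path (p : qpath) : fsum := [:: (1, p)].
Definition fsum_one : fsum := [seq (1, (i, [::])) | i <- enum 'I_n].
Definition fsum_scale (c : F) (s : fsum) : fsum := [seq (c * z.1, z.2) | z <- s].
Definition fsum_mul (s t : fsum) : fsum :=
  flatten [seq [seq (y.1 * z.1, qcat y.2 z.2) | z <- t & qt y.2 == qs z.2] | y <- s].
Definition fsum_eval (phi : nat -> fsum) (f : ncpoly F) : fsum :=
  eval_ncpoly [::] fsum_one cat fsum_mul fsum_scale phi f.

Definition pa_of_fsum (s : fsum) : pa :=
  fun r => \sum_(z <- s) if z.2 == r then z.1 else 0.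

Lemma pa_of_fsum_nil : pa_of_fsum [::] = @pa_zero F n E.
Proof. by apply: functional_extensionality => r; rewrite /pa_of_fsum big_nil. Qed.

Lemma pa_of_fsum_cat s t : pa_of_fsum (s ++ t) = pa_add (pa_of_fsum s) (pa_of_fsum t).
Proof. by apply: functional_extensionality => r; rewrite /pa_of_fsum big_cat. Qed.

Lemma pa_of_fsum_scale c s : pa_of_fsum (fsum_scale c s) = pa_scale c (pa_of_fsum s).
Proof.
apply: functional_extensionality => r; rewrite /pa_of_fsum /pa_scale big_map mulr_sumr.
by apply: eq_bigr => z _ /=; case: ifP; rewrite ?mulr0.
Qed.

Lemma pa_of_fsum_one : pa_of_fsum fsum_one = @pa_one F n E.
Proof.
apply: functional_extensionality => -[v [|a w]]; rewrite /pa_of_fsum big_map big_enum /=.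
  by rewrite (bigD1 v) //= eqxx big1 ?addr0 // => i /negbTE iv; rewrite xpair_eqE iv.
by rewrite big1 // => i _; rewrite xpair_eqE andbF.
Qed.

Lemma sum_factorizations (p q r : qpath) (c : F) :
  \sum_(k < (size r.2).+1)
     (if (p == (r.1, take k r.2)) && (q == (endv r.1 (take k r.2), drop k r.2))
      then c else 0)
  = if (qt p == qs q) && (qcat p q == r) then c else 0.
Proof.
case: ifP => [/andP[/eqP pq /eqP pqr]|no_fact]; last first.
  rewrite big1 // => k _; case: ifP => // /andP[/eqP p_take /eqP q_drop].
  move: no_fact; rewrite p_take q_drop /qt /qs /qcat /= cat_take_drop.
  by rewrite -surjective_pairing !eqxx.
have size_p : (size p.2 < (size r.2).+1)%N by rewrite -pqr size_cat ltnS leq_addr.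
rewrite (bigD1 (Ordinal size_p)) //= big1 ?addr0.
  rewrite -pqr /= take_size_cat // drop_size_cat //.
  by have -> : endv p.1 p.2 = q.1 := pq; rewrite -!surjective_pairing !eqxx.
move=> k /eqP k_ne; case: ifP => // /andP[/eqP p_take _]; case: k_ne.
suff k_p : nat_of_ord k = size p.2 by apply: val_inj.
rewrite p_take /= size_take.
by case: ltnP => // le_k; apply/eqP; rewrite eqn_leq le_k -ltnS ltn_ord.
Qed.

Lemma pa_of_fsum_mul s t :
  pa_of_fsum (fsum_mul s t) = pa_mul tgt (pa_of_fsum s) (pa_of_fsum t).
Proof.
apply: functional_extensionality => r; rewrite /pa_of_fsum /pa_mul /fsum_mul big_flatten /=.
rewrite big_map; symmetry.
under eq_bigr => k _ do rewrite mulr_suml.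
rewrite exchange_big /=; apply: eq_bigr => y _.
under eq_bigr => k _ do rewrite mulr_sumr.
rewrite exchange_big big_map big_filter [RHS]big_mkcond /=; apply: eq_bigr => z _.
rewrite -if_and -sum_factorizations; apply: eq_bigr => k _.
by case: ifP; case: ifP; rewrite ?mulr0 ?mul0r.
Qed.

Lemma pa_of_fsum_eval phi f :
  pa_of_fsum (fsum_eval phi f) = pa_eval tgt (pa_of_fsum \o phi) f.
Proof.
apply: eval_ncpoly_morph.
- exact: pa_of_fsum_nil.
- exact: pa_of_fsum_one.
- exact: pa_of_fsum_cat.
- exact: pa_of_fsum_mul.
- exact: pa_of_fsum_scale.
Qed.

Lemma pa_of_fsum_supp s r : pa_of_fsum s r != 0 -> r \in map snd s.
Proof.
apply: contraR => rNs; apply/eqP; rewrite /pa_of_fsum big1_seq // => z /andP[_ zs].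
by case: eqP => // zr; case/negP: rNs; rewrite -zr map_f.
Qed.

Definition mx_of_fsum (wt : E -> nat) (x : F) (s : fsum) : 'M[F]_n :=
  \sum_(z <- s) (z.1 * x ^+ seq_weight wt z.2.2) *: delta_mx (qs z.2) (qt z.2).

Section WeightedMatrices.
Variables (wt : E -> nat) (x : F).

Lemma mx_of_fsum_nil : mx_of_fsum wt x [::] = 0.
Proof. by rewrite /mx_of_fsum big_nil. Qed.

Lemma mx_of_fsum_cat s t :
  mx_of_fsum wt x (s ++ t) = mx_of_fsum wt x s + mx_of_fsum wt x t.
Proof. by rewrite /mx_of_fsum big_cat. Qed.

Lemma mx_of_fsum_scale c s : mx_of_fsum wt x (fsum_scale c s) = c *: mx_of_fsum wt x s.
Proof.
by rewrite /mx_of_fsum big_map scaler_sumr; apply: eq_bigr => z _; rewrite scalerA mulrA.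
Qed.

Lemma mx_of_fsum_one : mx_of_fsum wt x fsum_one = 1%:M.
Proof.
rewrite /mx_of_fsum big_map big_enum /= [RHS]matrix_sum_delta; apply: eq_bigr => i _.
rewrite /seq_weight big_nil expr0 mulr1 scale1r (bigD1 i) //= big1 ?addr0.
  by rewrite mxE eqxx scale1r.
by move=> j /negbTE ji; rewrite mxE eq_sym ji scale0r.
Qed.

Lemma mx_of_fsum_mul s t :
  mx_of_fsum wt x (fsum_mul s t) = mx_of_fsum wt x s *m mx_of_fsum wt x t.
Proof.
rewrite /mx_of_fsum /fsum_mul big_flatten /= big_map mulmx_suml; apply: eq_bigr => y _.
rewrite big_map big_filter big_mkcond mulmx_sumr; apply: eq_bigr => z _ /=.
rewrite -scalemxAl -scalemxAr scalerA mul_delta_mx_cond.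
case: eqP => [yz|_]; last by rewrite mulr0n scaler0.
rewrite mulr1n qt_qcat // /seq_weight big_cat /= exprD.
by congr (_ *: _); rewrite mulrACA.
Qed.

Lemma mx_of_fsum_eval phi f :
  mx_of_fsum wt x (fsum_eval phi f) = mx_eval (mx_of_fsum wt x \o phi) f.
Proof.
apply: eval_ncpoly_morph.
- exact: mx_of_fsum_nil.
- exact: mx_of_fsum_one.
- exact: mx_of_fsum_cat.
- exact: mx_of_fsum_mul.
- exact: mx_of_fsum_scale.
Qed.

Lemma mx_of_fsum_pa t :
  mx_of_fsum wt x t = \sum_(q <- undup (map snd t))
    (pa_of_fsum t q * x ^+ seq_weight wt q.2) *: delta_mx (qs q) (qt q).
Proof.
rewrite /pa_of_fsum.
under [RHS]eq_bigr => q _ do rewrite mulr_suml scaler_suml.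
rewrite exchange_big /mx_of_fsum; apply: eq_big_seq => z zt.
rewrite (eq_bigr (fun q => if q == z.2
    then (z.1 * x ^+ seq_weight wt q.2) *: delta_mx (qs q) (qt q) else 0)).
  by rewrite sumr_pred1_uniq ?undup_uniq // mem_undup map_f.
by move=> q _; rewrite eq_sym; case: ifP; rewrite ?mul0r ?scale0r.
Qed.

Lemma mx_of_fsum_supp s i j :
  mx_of_fsum wt x s i j != 0 -> has (fun z => (qs z.2 == i) && (qt z.2 == j)) s.
Proof.
apply: contraR => /hasPn none; apply/eqP; rewrite summxE big1_seq // => z /andP[_ zs].
by rewrite !mxE [i == _]eq_sym [j == _]eq_sym (negbTE (none z zs)) mulr0.
Qed.

End WeightedMatrices.

Definition fsum_on (P : qpath -> Prop) (s : fsum) : Prop := forall z, z \in s -> P z.2.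

Lemma fsum_eval_on_qpath (phi : nat -> fsum) f :
  (forall k, fsum_on (is_qpath src tgt) (phi k)) ->
  fsum_on (is_qpath src tgt) (fsum_eval phi f).
Proof.
move=> phi_paths; apply: (eval_ncpoly_ind (P := fsum_on _)) => //.
- by move=> _ /mapP[i _ ->].
- by move=> s t s_paths t_paths z; rewrite mem_cat => /orP[/s_paths|/t_paths].
- move=> s t s_paths t_paths w /flattenP[_ /mapP[y ys ->] /mapP[z]].
  rewrite mem_filter => /andP[/eqP yz zt] ->.
  exact: is_qpath_qcat (s_paths y ys) (t_paths z zt) yz.
- by move=> c s s_paths w /mapP[z zs ->]; exact: (s_paths z zs).
Qed.

Section Lifting.
Variable pi : qpath -> Prop.

Lemma pa_of_fsum_FQpi s : fsum_on (in_tilde tgt pi) s -> in_FQpi tgt pi (pa_of_fsum s).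
Proof.
move=> s_tilde; exists (map snd s) => p /pa_of_fsum_supp ps; split=> //.
by case/mapP: ps => z zs ->; apply: s_tilde.
Qed.

Lemma mx_of_fsum_Api wt x s :
  fsum_on (in_tilde tgt pi) s -> in_Api tgt pi (mx_of_fsum wt x s).
Proof.
move=> s_tilde i j /mx_of_fsum_supp/hasP[z zs /andP[/eqP <- /eqP <-]].
by exists z.2; split; first exact: s_tilde.
Qed.

Lemma FQpi_lift u :
  in_FQpi tgt pi u -> exists2 s, fsum_on (in_tilde tgt pi) s & pa_of_fsum s = u.
Proof.
move=> [L uL]; exists [seq (u p, p) | p <- undup L & u p != 0].
  by move=> w /mapP[p]; rewrite mem_filter => /andP[up _] ->; exact: (uL p up).2.
apply: functional_extensionality => r; rewrite /pa_of_fsum big_map big_filter big_mkcond /=.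
rewrite (eq_bigr (fun p => if p == r then u p else 0)) => [|p _]; last first.
  by case: (eqVneq (u p) 0) => [->|//]; case: ifP.
rewrite sumr_pred1_uniq ?undup_uniq // mem_undup.
by case: (eqVneq (u r) 0) => [->|ur]; [case: ifP | rewrite (uL r ur).1].
Qed.

Lemma Api_lift A :
  in_Api tgt pi A -> exists2 s, fsum_on (in_tilde tgt pi) s & mx_of_fsum (fun=> 0%N) 1 s = A.
Proof.
move=> A_pi.
have /choice[P P_tilde] : forall ij : 'I_n * 'I_n, exists p : qpath,
    A ij.1 ij.2 != 0 -> [/\ in_tilde tgt pi p, qs p = ij.1 & qt p = ij.2].
  move=> [i j] /=; have [Aij|_] := boolP (A i j != 0); last by exists (i, [::]).
  by have [p [? [? ?]]] := A_pi i j Aij; exists p.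
exists [seq (A ij.1 ij.2, P ij) | ij <- [seq (i, j) | i <- enum 'I_n, j <- enum 'I_n]
                                & A ij.1 ij.2 != 0].
  by move=> w /mapP[ij]; rewrite mem_filter => /andP[/P_tilde[ij_tilde _ _] _] ->.
rewrite /mx_of_fsum big_map big_filter big_mkcond big_allpairs [RHS]matrix_sum_delta.
rewrite big_enum; apply: eq_bigr => i _; rewrite big_enum; apply: eq_bigr => j _ /=.
have [Aij|/negPn/eqP ->] := boolP (A i j != 0); last by rewrite scale0r.
by have [_ -> ->] := P_tilde (i, j) Aij; rewrite expr1n mulr1.
Qed.

End Lifting.
End FormalSums.

Section PathAlgebra.
Variables (F : fieldType) (n : nat) (E : finType) (src tgt : E -> 'I_n).
Local Notation qpath := (qpath n E).
Local Notation qt := (qt tgt).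
Local Notation pa_path p := (pa_of_fsum (@fsum_path F n E p)).
Local Notation pa_one := (@pa_one F n E).

Lemma pa_mul_path (p q : qpath) :
  qt p = qs q -> pa_mul tgt (pa_path p) (pa_path q) = pa_path (qcat p q).
Proof. by move=> pq; rewrite -pa_of_fsum_mul /fsum_mul /= pq eqxx /= mulr1. Qed.

Lemma pa_mul_path1 (p : qpath) : pa_mul tgt (pa_path p) pa_one = pa_path p.
Proof.
rewrite -pa_of_fsum_one -pa_of_fsum_mul; apply: functional_extensionality => r.
rewrite /pa_of_fsum /fsum_mul /= cats0 big_map big_filter /fsum_one big_map.
rewrite big_enum_cond /=.
rewrite (big_pred1 (qt p)) => [|i]; last by rewrite /= eq_sym.
by rewrite big_seq1 /qcat cats0 -surjective_pairing mulr1.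
Qed.

Lemma pa_eval_apply phi f r : pa_eval tgt phi f r =
  \sum_(cw <- f) cw.1 * eval_word pa_one (pa_mul tgt) phi cw.2 r.
Proof. by elim: f => [|[c w] f IH]; rewrite ?big_nil // big_cons -IH. Qed.

Lemma eval_word_cycles v (Y : nat -> seq E) : (forall k, is_cycle src tgt v (Y k)) ->
  forall w s, eval_word pa_one (pa_mul tgt) (fun k => pa_path (v, Y k)) w (v, s)
              = if flatten (map Y w) == s then 1 else 0.
Proof.
move=> Y_cycle.
have eval_cons k w : eval_word pa_one (pa_mul tgt) (fun k => pa_path (v, Y k)) (k :: w)
                     = pa_path (v, Y k ++ flatten (map Y w)).
  elim: w k => [|k' w IH] k /=; first by rewrite pa_mul_path1 cats0.
  by move: (IH k') => /= ->; rewrite pa_mul_path //; case/andP: (Y_cycle k) => _ /eqP.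
case=> [|k w] s; first by case: s.
by rewrite eval_cons /pa_of_fsum big_seq1 xpair_eqE eqxx.
Qed.

(* If two cycles [c1], [c2] at [v] do not commute, [c1 c2] and [c2 c1] generate a
   free monoid, so substituting suitable words in them for the variables reads off
   any nonzero coefficient of a polynomial. *)
Lemma PI_cycles_commute : FQ_is_PI F src tgt -> cycles_commute src tgt.
Proof.
move=> [f [[w0 f_w0] f_id]] v c1 c2 cyc1 cyc2; apply/eqP; apply: contraT => c12.
pose code := block_code (c1 ++ c2) (c2 ++ c1).
pose Y k := flatten [seq if b then c1 ++ c2 else c2 ++ c1 | b <- unary k].
have Y_cycle k : is_cycle src tgt v (Y k).
  apply: is_cycle_flatten; apply/allP => _ /mapP[[] _ ->]; exact: is_cycle_cat.
have phi_FQ k : in_FQ src tgt (pa_path (v, Y k)).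
  exists [:: (v, Y k)] => p; rewrite /pa_of_fsum big_seq1.
  case: ifP => [/eqP <- _|_]; last by rewrite eqxx.
  by rewrite mem_head; case/andP: (Y_cycle k).
have code_inj : injective code by apply: block_code_inj; rewrite // !size_cat addnC.
have flatten_Y w : flatten (map Y w) = code w by [].
have := congr1 (fun u => u (v, code w0)) (f_id _ phi_FQ); rewrite /= pa_eval_apply.
under eq_bigr => cw _ do rewrite eval_word_cycles // flatten_Y (inj_eq code_inj).
rewrite (eq_bigr (fun cw => if cw.2 == w0 then cw.1 else 0)) -?big_mkcond => [f0|cw _].
  by move: f_w0; rewrite /nccoef f0 eqxx.
by case: ifP; rewrite ?mulr1 ?mulr0.
Qed.

(* The entry [(s(r), t(r))] of the weighted image is a polynomial in [x]; when the
   weight separates the paths between two vertices, its coefficients are those of [t]. *)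
Lemma pa_of_fsum_eq0 (t : fsum F n E) :
  [pchar F] =i pred0 -> cycles_commute src tgt -> fsum_on (is_qpath src tgt) t ->
  (forall wt x, mx_of_fsum tgt wt x t = 0) -> pa_of_fsum t = @pa_zero F n E.
Proof.
move=> F0 comm t_paths t0; apply: functional_extensionality => r; rewrite /pa_zero.
set U := undup (map snd t).
have [rU|rNU] := boolP (r \in U); last first.
  by apply/eqP; apply: contraR rNU => /pa_of_fsum_supp; rewrite mem_undup.
pose N := (\max_(q <- U) size q.2).+1.
have size_lt q : q \in U -> (size q.2 < N)%N.
  by move=> qU; rewrite ltnS (leq_bigmax_seq _ qU).
have U_paths q : q \in U -> is_qpath src tgt q.
  by rewrite mem_undup => /mapP[z zt ->]; apply: t_paths.
pose wt (a : E) := (N ^ enum_rank a)%N.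
pose a q := pa_of_fsum t q * ((qs q == qs r) && (qt q == qt r))%:R.
have : \sum_(q <- U | seq_weight wt q.2 == seq_weight wt r.2) a q = 0.
  apply: (sum_monomials_eq0 F0) => x.
  have := congr1 (fun A : 'M_n => A (qs r) (qt r)) (t0 wt x).
  rewrite mx_of_fsum_pa summxE mxE => entry; rewrite -[RHS]entry.
  by apply: eq_bigr => q _; rewrite !mxE mulrAC [qs r == _]eq_sym [qt r == _]eq_sym.
rewrite big_mkcond (bigD1_seq r) ?undup_uniq //= eqxx big1_seq ?addr0 /a ?eqxx ?mulr1 //.
move=> q /andP[qr qU]; case: eqP => // wq.
case: (boolP (_ && _)) => [/andP[/eqP sq _]|]; last by rewrite mulr0.
case/eqP: qr; apply: (qpath_eq_of_seq_weight comm (U_paths q qU) (U_paths r rU) sq)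
  (size_lt q qU) (size_lt r rU) wq.
Qed.

Lemma FQpi_identity_mx_identity (pi : qpath -> Prop) (f : ncpoly F) :
  pa_identity tgt (in_FQpi tgt pi) f -> mx_identity (in_Api tgt pi) f.
Proof.
move=> f_id phi phi_Api.
have /choice[s s_lift] : forall k, exists s,
    fsum_on (in_tilde tgt pi) s /\ mx_of_fsum tgt (fun=> 0%N) 1 s = phi k.
  by move=> k; have [s ? ?] := Api_lift (phi_Api k); exists s.
have -> : phi = mx_of_fsum tgt (fun=> 0%N) 1 \o s.
  by apply: functional_extensionality => k; rewrite /= (s_lift k).2.
have t0 : pa_of_fsum (fsum_eval tgt s f) = @pa_zero F n E.
  by rewrite pa_of_fsum_eval; apply: f_id => k; apply: pa_of_fsum_FQpi; case: (s_lift k).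
rewrite -mx_of_fsum_eval mx_of_fsum_pa t0 big1 // => q _.
by rewrite /pa_zero mul0r scale0r.
Qed.

Lemma mx_identity_FQpi_identity (pi : qpath -> Prop) (f : ncpoly F) :
  [pchar F] =i pred0 -> cycles_commute src tgt -> (forall p, pi p -> is_qpath src tgt p) ->
  mx_identity (in_Api tgt pi) f -> pa_identity tgt (in_FQpi tgt pi) f.
Proof.
move=> F0 comm pi_paths f_id phi phi_FQpi.
have /choice[s s_lift] : forall k, exists s,
    fsum_on (in_tilde tgt pi) s /\ pa_of_fsum s = phi k.
  by move=> k; have [s ? ?] := FQpi_lift (phi_FQpi k); exists s.
have -> : phi = @pa_of_fsum F n E \o s.
  by apply: functional_extensionality => k; rewrite /= (s_lift k).2.
rewrite -pa_of_fsum_eval; apply: pa_of_fsum_eq0 => //.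
  apply: fsum_eval_on_qpath => k z /(s_lift k).1; exact: in_tilde_is_qpath.
move=> wt x; rewrite mx_of_fsum_eval; apply: f_id => k.
by apply: mx_of_fsum_Api; case: (s_lift k).
Qed.

End PathAlgebra.

Unset Implicit Arguments.

Theorem theorem1 (F : fieldType) (charF0 : [pchar F] =i pred0)
  (n : nat) (E : finType) (src tgt : E -> 'I_n)
  (HPI : FQ_is_PI F src tgt)
  (pi : qpath n E -> Prop) (Hpi : forall p, pi p -> is_qpath src tgt p) :
  forall f : ncpoly F,
    pa_identity tgt (in_FQpi tgt pi) f <-> mx_identity (in_Api tgt pi) f.
Proof.
move=> f; split; first exact: FQpi_identity_mx_identity.
exact: mx_identity_FQpi_identity charF0 (PI_cycles_commute HPI) Hpi.
Qed.
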